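(* Let $G$ be a graph with at least one edge and let $x$ be a non-isolated vertex of $G$. Then there exists a Z-Grundy dominating sequence of $G$ that contains $x$.
   Context: For a graph $G$, $N(v)$ is the open neighborhood and $N[v]=N(v)\cup\{v\}$ the closed neighborhood of $v$. A sequence $(v_1,\ldots,v_k)$ of distinct vertices is a Z-sequence if $N(v_i)\setminus\bigcup_{j=1}^{i-1}N[v_j]\neq\emptyset$ for each $i\in[k]$. A Z-Grundy dominating sequence is a Z-sequence of maximum possible length in $G$. *)

(* A finite simple graph is a symmetric irreflexive relation
   e : rel T on a finType T. *)
From mathcomp Require Import all_boot.
Set Implicit Arguments. Unset Strict Implicit. Unset Printing Implicit Defensive.

Section Graph.
Variables (T : finType) (e : rel T).

Definition onbhd (v : T) : {set T} := [set u | e v u].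
Definition cnbhd (v : T) : {set T} := v |: onbhd v.

Definition cnbhd_seq (s : seq T) : {set T} := \bigcup_(v <- s) cnbhd v.

Definition is_Zseq (s : seq T) : bool :=
  uniq s &&
  all (fun i => match s with
                | [::] => true
                | v0 :: _ => onbhd (nth v0 s i) :\: cnbhd_seq (take i s) != set0
                end) (iota 0 (size s)).

Definition is_ZGrundy (s : seq T) : Prop :=
  is_Zseq s /\ forall t : seq T, is_Zseq t -> size t <= size s.
End Graph.

From mathcomp Require Import all_boot.
Set Implicit Arguments. Unset Strict Implicit. Unset Printing Implicit Defensive.

(* Fix a Z-Grundy sequence (v_1, ..., v_k) together with footprints
   w_i in N(v_i) \ (N[v_1] u ... u N[v_(i-1)]).  The condition "w_i is not in
   N[v_j] for j < i" is symmetric in v and w, so (w_k, ..., w_1), footprinted by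
   the v_i, is again a Z-sequence of length k; this settles the case x = w_i.
   If x is neither some v_i nor some w_i, maximality forces N(x) to be dominated
   by the sequence.  Let v_(i+1) be the first vertex after which N(x) is
   dominated: replacing v_(i+1) by x, footprinted by a neighbour of x that is
   still undominated before it, keeps every later footprint valid, because a
   later footprint adjacent to x would be dominated by some v_j with j <= i+1. *)

Lemma pairwise_exchange (U : Type) (r : rel U) s1 y y' s2 :
  pairwise r (s1 ++ y :: s2) -> all (r^~ y') s1 -> all (r y') s2 ->
  pairwise r (s1 ++ y' :: s2).
Proof.
rewrite !pairwise_cat !pairwise_cons allrel_consr => /and3P[/andP[_ r12] p1 /andP[_ p2]].
by move=> r1 r2; rewrite allrel_consr r1 r12 p1 r2 p2.
Qed.

Lemma pairwise_rev (U : Type) (r : rel U) (s : seq U) :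
  pairwise r (rev s) = pairwise (fun x y => r y x) s.
Proof.
by elim: s => //= x s IH; rewrite rev_cons pairwise_rcons all_rev IH.
Qed.

Section ZSequences.
Variables (T : finType) (e : rel T).

Lemma in_cnbhd v w : (w \in cnbhd e v) = (w == v) || e v w.
Proof. by rewrite in_setU1 inE. Qed.

Lemma in_cnbhd_seq s w : (w \in cnbhd_seq e s) = has (fun v => w \in cnbhd e v) s.
Proof.
elim: s => [|v s IH]; first by rewrite /cnbhd_seq big_nil inE.
by rewrite /cnbhd_seq big_cons in_setU /=; congr (_ || _); exact: IH.
Qed.

Lemma is_Zseq_nth x0 s : is_Zseq e s =
  uniq s && all (fun i => onbhd e (nth x0 s i) :\: cnbhd_seq e (take i s) != set0)
                (iota 0 (size s)).
Proof.
case: s => [//|v s]; rewrite /is_Zseq; congr (_ && _).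
by apply: eq_in_all => i; rewrite mem_iota => /andP[_ lt]; rewrite (set_nth_default x0).
Qed.

Lemma is_Zseq_rcons s v : is_Zseq e (rcons s v) =
  [&& is_Zseq e s, v \notin s & onbhd e v :\: cnbhd_seq e s != set0].
Proof.
rewrite !(is_Zseq_nth v) rcons_uniq size_rcons -addn1 iotaD all_cat add0n.
rewrite [iota _ 1]/= all_seq1 nth_rcons ltnn eqxx -cats1 (take_size_cat _ (erefl _)).
rewrite (@eq_in_all _ _ (fun i => onbhd e (nth v s i) :\: cnbhd_seq e (take i s) != set0)).
  by rewrite [_ && uniq s]andbC andbACA.
by move=> i; rewrite mem_iota => /andP[_ lt]; rewrite nth_cat lt takel_cat // ltnW.
Qed.

(* [p] lists the pairs (v_i, w_i) of a Z-sequence with a choice of footprints. *)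
Definition footprinting (p : seq (T * T)) : bool :=
  all (fun a => e a.1 a.2) p && pairwise (fun a b => b.2 \notin cnbhd e a.1) p.

Lemma footprinting_rcons p v w : footprinting (rcons p (v, w)) =
  [&& footprinting p, e v w & w \notin cnbhd_seq e (unzip1 p)].
Proof.
rewrite /footprinting all_rcons pairwise_rcons in_cnbhd_seq has_map -all_predC /=.
by case: (e v w) (all _ p) => [] [] //=; rewrite andbC.
Qed.

Lemma is_ZseqP s : reflect (exists2 p, footprinting p & unzip1 p = s) (is_Zseq e s).
Proof.
elim/last_ind: s => [|s v IH]; first by apply: ReflectT; exists [::].
rewrite is_Zseq_rcons; apply: (iffP and3P) => [[/IH[p fp ps] _ /set0Pn[w]]|[q]].
  rewrite in_setD inE -ps => /andP[wS vw]; exists (rcons p (v, w)).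
    by rewrite footprinting_rcons fp vw.
  by rewrite /unzip1 map_rcons.
case/lastP: q => [|p [v' w]]; first by case: s {IH}.
rewrite footprinting_rcons [unzip1 (rcons _ _)]map_rcons => /and3P[fp vw wS] /rcons_inj[ps <-].
split; first by apply/IH; exists p.
  apply: contra wS; rewrite -ps in_cnbhd_seq => vp; apply/hasP; exists v' => //.
  by rewrite in_cnbhd vw orbT.
by apply/set0Pn; exists w; rewrite in_setD inE vw andbT -ps.
Qed.

Lemma footprinting_exchange p1 a p2 x w :
  footprinting (p1 ++ a :: p2) -> x \notin unzip2 p2 -> e x w ->
  w \notin cnbhd_seq e (unzip1 p1) ->
  onbhd e x \subset cnbhd_seq e (unzip1 (rcons p1 a)) ->
  footprinting (p1 ++ (x, w) :: p2).
Proof.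
move=> /andP[E P] xp2 xw wp1 Nx.
have := P; rewrite -cat_rcons pairwise_cat => /and3P[/allrelP before _ _].
apply/andP; split.
  by move: E; rewrite !all_cat => /and3P[-> _ E2] /=; rewrite xw.
apply: pairwise_exchange P _ _.
  by move: wp1; rewrite in_cnbhd_seq has_map -all_predC.
apply/allP => b bp2; rewrite in_cnbhd negb_or; apply/andP; split.
  by apply: contra xp2 => /eqP /= <-; apply: map_f.
apply/negP => xb.
have /hasP[_ /mapP[c cp1 ->] bc] : has (fun v => b.2 \in cnbhd e v) (unzip1 (rcons p1 a)).
  by rewrite -in_cnbhd_seq; apply: (subsetP Nx); rewrite inE.
exact: negP (before c b cp1 bp2) bc.
Qed.

Lemma footprinting_exchange_into p x :
  footprinting p -> x \notin unzip2 p -> onbhd e x != set0 ->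
  onbhd e x \subset cnbhd_seq e (unzip1 p) ->
  exists2 q, footprinting q & size q = size p /\ x \in unzip1 q.
Proof.
move=> fp xp Nx0 Nxp.
pose dominated j := onbhd e x \subset cnbhd_seq e (take j (unzip1 p)).
have [|j domj minj] := ex_minnP (P := dominated).
  by exists (size p); rewrite /dominated take_oversize // size_map.
have jp : j <= size p by apply: minj; rewrite /dominated take_oversize // size_map.
case: j domj minj jp => [|i] domi mini ip.
  by move: domi; rewrite /dominated take0 /cnbhd_seq big_nil subset0 (negbTE Nx0).
have /subsetPn[w xw wi] : ~~ dominated i by apply/negP => /mini; rewrite ltnn.
have Ep : p = take i p ++ nth (x, w) p i :: drop i.+1 p by rewrite -drop_nth // cat_take_drop.
exists (take i p ++ (x, w) :: drop i.+1 p).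
- apply: (footprinting_exchange (a := nth (x, w) p i)); first by rewrite -Ep.
  + by apply: contra xp; rewrite /unzip2 map_drop; apply: mem_drop.
  + by rewrite inE in xw.
  + by rewrite /unzip1 map_take.
  + by rewrite -take_nth // /unzip1 map_take.
- by split; [rewrite [in RHS]Ep !size_cat | rewrite /unzip1 map_cat mem_cat inE eqxx orbT].
Qed.

Lemma exists_ZGrundy : exists s, is_ZGrundy e s.
Proof.
pose has_Zseq n := [exists t : n.-tuple T, is_Zseq e t].
have ex0 : exists n, has_Zseq n by exists 0; apply/existsP; exists [tuple].
have ub n : has_Zseq n -> n <= #|T|.
  by case/existsP=> t /andP[u _]; rewrite -(size_tuple t) -(card_uniqP u) max_card.
case: (ex_maxnP ex0 ub) => n /existsP[t Zt] maxn.
exists t; split=> // t' Zt'; rewrite size_tuple; apply: maxn.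
by apply/existsP; exists (in_tuple t').
Qed.

Lemma ZGrundy_size s t :
  is_ZGrundy e s -> is_Zseq e t -> size s <= size t -> is_ZGrundy e t.
Proof. by move=> [_ maxs] Zt st; split=> // t' /maxs/leq_trans; apply. Qed.

Lemma ZGrundy_nbhd_dominated s x :
  is_ZGrundy e s -> x \notin s -> onbhd e x \subset cnbhd_seq e s.
Proof.
move=> [Zs maxs] xs; apply/subsetP => w xw; apply: contraT => ws.
have /maxs : is_Zseq e (rcons s x).
  by rewrite is_Zseq_rcons Zs xs; apply/set0Pn; exists w; rewrite in_setD ws.
by rewrite size_rcons ltnn.
Qed.

Hypothesis e_sym : symmetric e.

Lemma cnbhdC v w : (w \in cnbhd e v) = (v \in cnbhd e w).
Proof. by rewrite !in_cnbhd eq_sym e_sym. Qed.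

Lemma footprinting_rev_swap p :
  footprinting (rev [seq (a.2, a.1) | a <- p]) = footprinting p.
Proof.
rewrite /footprinting all_rev all_map pairwise_rev pairwise_map.
congr (_ && _); first by apply: eq_all => a; rewrite /= e_sym.
by apply: eq_pairwise => a b; rewrite /= cnbhdC.
Qed.

Lemma is_Zseq_rev_unzip2 p : footprinting p -> is_Zseq e (rev (unzip2 p)).
Proof.
move=> fp; apply/is_ZseqP; exists (rev [seq (a.2, a.1) | a <- p]).
  by rewrite footprinting_rev_swap.
by rewrite /unzip1 map_rev -map_comp.
Qed.

End ZSequences.

Theorem proposition3p1 (T : finType) (e : rel T)
  (e_sym : symmetric e) (e_irr : irreflexive e)
  (has_edge : exists u v : T, e u v)
  (x : T) (x_nonisol : exists y : T, e x y) :
  exists s : seq T, is_ZGrundy e s /\ x \in s.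
Proof.
have [s Gs] := exists_ZGrundy e.
have [p fp ps] := is_ZseqP e s Gs.1.
have [xs | xs] := boolP (x \in s); first by exists s.
have [xp | xp] := boolP (x \in unzip2 p).
  exists (rev (unzip2 p)); rewrite mem_rev xp; split=> //.
  apply: ZGrundy_size Gs (is_Zseq_rev_unzip2 e_sym fp) _.
  by rewrite size_rev -ps !size_map.
have Nx0 : onbhd e x != set0.
  by case: x_nonisol => y xy; apply/set0Pn; exists y; rewrite inE.
have Nxp : onbhd e x \subset cnbhd_seq e (unzip1 p).
  by rewrite ps; apply: ZGrundy_nbhd_dominated.
have [q fq [qp xq]] := footprinting_exchange_into fp xp Nx0 Nxp.
exists (unzip1 q); split=> //; apply: ZGrundy_size Gs _ _.
  by apply/is_ZseqP; exists q.
by rewrite -ps !size_map qp.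
Qed.
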